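(* Let $\Gamma$ be a finite group and let $\alpha_1,\dots,\alpha_l$ be the (pairwise inequivalent) irreducible unitary representations of $\Gamma$ of dimension greater than one, $\alpha_k$ acting on $\mathbb{C}^{n_k}$. For $\boldsymbol{\xi}=(\xi_1,\dots,\xi_l)\in\prod_{k=1}^l S^{n_k-1}$ (each $\xi_k$ a unit vector in $\mathbb{C}^{n_k}$) set $T_{\boldsymbol\xi}(g)=\sum_{k=1}^l\langle\xi_k,\alpha_k(g)\xi_k\rangle$, and for $g,h\in\Gamma$ let $V_{g,h}=\{\boldsymbol\xi\in\prod_k S^{n_k-1}:T_{\boldsymbol\xi}(g)=T_{\boldsymbol\xi}(h)\}$. If $g\neq h$ and at least one of $g,h$ is not central in $\Gamma$, then $V_{g,h}$ is nowhere dense; that is, for almost all choices of $\boldsymbol\xi$ we have $T_{\boldsymbol\xi}(g)\neq T_{\boldsymbol\xi}(h)$.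
   Context: $S^{n_k-1}$ denotes the unit sphere of $\mathbb{C}^{n_k}$, regarded as a real algebraic variety; ''almost all'' refers to the product of the rotation-invariant probability measures (a nowhere dense real algebraic subset of the irreducible variety $\prod_k S^{n_k-1}$ has measure zero). *)

From mathcomp Require Import all_boot all_algebra all_fingroup all_solvable.
From mathcomp Require Import mxrepresentation.
From mathcomp Require Export complex.
From mathcomp Require Export reals.
Set Implicit Arguments. Unset Strict Implicit. Unset Printing Implicit Defensive.
Import GRing.Theory Num.Theory.
Local Open Scope ring_scope.

Definition adjmx (R : realType) m n (A : 'M[R[i]]_(m, n)) : 'M[R[i]]_(n, m) :=
  (map_mx (fun z : R[i] => z^*) A)^T.

Definition unitary_repr (R : realType) (gT : finGroupType) n
  (rho : mx_representation R[i] [set: gT] n) : Prop :=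
  forall g : gT, rho g *m adjmx (rho g) = 1%:M.

Definition herm_form (R : realType) n (A : 'M[R[i]]_n) (u : 'rV[R[i]]_n) : R[i] :=
  \sum_(p < n) \sum_(q < n) (u 0 p)^* * A p q * u 0 q.

Definition in_sphere_prod (R : realType) l (n : 'I_l -> nat)
  (xi : forall k : 'I_l, 'rV[R[i]]_(n k)) : Prop :=
  forall k : 'I_l, \sum_(p < n k) `|xi k 0 p| ^+ 2 = 1.

Definition close (R : realType) l (n : 'I_l -> nat) (eps : R)
  (xi zeta : forall k : 'I_l, 'rV[R[i]]_(n k)) : Prop :=
  forall (k : 'I_l) (p : 'I_(n k)), `|xi k 0 p - zeta k 0 p| < (eps%:C)%C.

Definition Txi (R : realType) (gT : finGroupType) l (n : 'I_l -> nat)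
  (alpha : forall k : 'I_l, mx_representation R[i] [set: gT] (n k))
  (xi : forall k : 'I_l, 'rV[R[i]]_(n k)) (g : gT) : R[i] :=
  \sum_(k < l) herm_form (alpha k g) (xi k).

(* A set V (a predicate on prod_k C^{n_k}) is nowhere dense in the product of
   spheres (subspace topology): every nonempty relatively open subset of the
   product of spheres contains a nonempty relatively open subset disjoint from V. *)
Definition nowhere_dense_in_sphere_prod (R : realType) l (n : 'I_l -> nat)
  (V : (forall k : 'I_l, 'rV[R[i]]_(n k)) -> Prop) : Prop :=
  forall xi, in_sphere_prod xi -> forall eps : R, 0 < eps ->
  exists xi', exists2 delta : R, 0 < delta &
    in_sphere_prod xi' /\
    forall zeta, in_sphere_prod zeta -> close delta xi' zeta ->
      close eps xi zeta /\ ~ V zeta.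

(* Let A_k := alpha_k g - alpha_k h, so that T_xi(g) - T_xi(h) = sum_k <xi_k, A_k xi_k>.
   If every A_k were scalar, g - h would act as a scalar in every irreducible
   representation (trivially so in dimension <= 1), hence would commute with the
   whole group in the semisimple regular representation; comparing coefficients in
   the group algebra then makes g and h central.  So some A_k is not scalar.
   A form x |-> <x, A x> that is constant near a point u of the unit sphere vanishes,
   after subtracting that constant times |x|^2, on a cone around u; being quadratic it
   then vanishes identically, so A is scalar.  Hence moving only the k-th component
   makes T(g) - T(h) nonzero arbitrarily close to any point, and by continuity it
   stays nonzero on a neighbourhood of the new point. *)

From mathcomp Require Import all_boot all_order all_algebra all_fingroup all_solvable.
From mathcomp Require Import mxrepresentation complex reals sesquilinear.
From mathcomp Require Import ring lra.
From Stdlib Require Import Classical.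

Set Implicit Arguments.
Unset Strict Implicit.
Unset Printing Implicit Defensive.

Import GRing.Theory Num.Theory Order.TTheory Normc.
Local Open Scope ring_scope.

Lemma mx_rsim_scalar_diff (F : fieldType) (gT : finGroupType) (G : {group gT})
    n1 n2 (rG1 : mx_representation F G n1) (rG2 : mx_representation F G n2) x y c :
  x \in G -> y \in G -> mx_rsim rG1 rG2 -> rG2 x - rG2 y = c%:M -> rG1 x - rG1 y = c%:M.
Proof.
move=> Gx Gy [B _ Bfree homB] rG2xy; apply: (row_free_inj Bfree).
by rewrite mulmxBl !homB // -mulmxBr rG2xy scalar_mxC.
Qed.

Lemma is_scalar_mx_le1 (R : pzRingType) n (A : 'M[R]_n) : (n <= 1)%N -> is_scalar_mx A.
Proof.
case: n A => [|[|//]] A _; first by rewrite [A]flatmx0 mx0_is_scalar.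
by rewrite [A]mx11_scalar scalar_mx_is_scalar.
Qed.

Section ScalarDifferences.
Variables (F : numFieldType) (gT : finGroupType).
Implicit Types g h x : gT.

Local Notation reprT := (mx_representation F [set: gT]).

Definition irr_scalar_diff g h :=
  forall m (rho : reprT m), mx_irreducible rho -> is_scalar_mx (rho g - rho h).

Lemma irr_scalar_diff_comm g h : irr_scalar_diff g h ->
  forall n (rG : reprT n) x, comm_mx (rG g - rG h) (rG x).
Proof.
move=> scal_gh n rG x; set M := rG g - rG h.
have inT y : y \in [set: gT] := in_setT y.
have redG : mx_completely_reducible rG 1%:M.
  by apply: mx_Maschke_pchar; rewrite /pgroup pcharf'_nat pnatr_eq0 -lt0n cardG_gt0.
suff: (1%:M <= kermx (M *m rG x - rG x *m M))%MS.
  by move/sub_kermxP; rewrite mul1mx => /eqP; rewrite subr_eq0 => /eqP.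
apply: (mx_reducible_semisimple (mxmodule1 rG) redG) => -[I W ? simW defW _].
rewrite -defW; apply/sumsmx_subP => i _; apply/sub_kermxP.
have modW := mxsimple_module (simW i).
have /is_scalar_mxP[c rW_c] := scal_gh _ _ ((submod_mx_irr modW).2 (simW i)).
have WM Y : (Y <= W i)%MS -> Y *m M = c *: Y.
  move=> sYW; rewrite -(in_submodK sYW) mulmxBr -!val_submodJ ?inT //.
  by rewrite -linearB /= -mulmxBr rW_c mul_mx_scalar linearZ.
rewrite mulmxBr !mulmxA WM // WM ?(mxmoduleP modW) ?inT //.
by rewrite scalemxAl subrr.
Qed.

Lemma natr_boolB_eq1 (a b : bool) : (a%:R - b%:R == 1 :> F) = a && ~~ b.
Proof.
case: a; case: b; rewrite /= ?subrr ?subr0 ?sub0r ?eqxx // eq_sym ?oner_eq0 //.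
by rewrite -subr_eq0 opprK -mulr2n pnatr_eq0.
Qed.

Lemma irr_scalar_diff_center g h : g != h -> irr_scalar_diff g h ->
  (g \in 'Z([set: gT]) /\ h \in 'Z([set: gT]))%g.
Proof.
move=> neq_gh scal_gh.
have inT y : y \in [set: gT] := in_setT y.
pose aG := regular_repr F [set: gT].
have comm_aG x : aG (g * x)%g - aG (h * x)%g = aG (x * g)%g - aG (x * h)%g.
  by rewrite !repr_mxM ?inT // -mulmxBl -mulmxBr irr_scalar_diff_comm.
have neq_gx x : (g * x == h * x)%g = false by apply/negbTE; rewrite (can_eq (mulgK x)).
have coef y z : gring_proj y (aG z) 0 0 = (y == z)%:R.
  by rewrite gring_projE ?inT // mulmxnE mxE eqxx.
have coefB y (A B : 'M[F]_#|[set: gT]|) :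
    gring_proj y (A - B) 0 0 = gring_proj y A 0 0 - gring_proj y B 0 0.
  by rewrite raddfB !mxE.
have proj y x := congr1 (fun A => gring_proj y A 0 0) (comm_aG x).
suff [cg ch] : centralises g [set: gT] /\ centralises h [set: gT].
  by split; apply/centerP; split.
split=> x _; apply/eqP.
  have := proj (g * x)%g x; rewrite /= !coefB !coef eqxx neq_gx subr0.
  by move/esym/eqP; rewrite natr_boolB_eq1 => /andP[].
have := proj (h * x)%g x; rewrite /= !coefB !coef eqxx eq_sym neq_gx sub0r.
by move/eqP; rewrite eqr_oppLR opprB eq_sym natr_boolB_eq1 => /andP[].
Qed.

Lemma exists_nonscalar_repr_diff l (n : 'I_l -> nat) (alpha : forall k, reprT (n k)) g h :
    (forall m (rho : reprT m), (1 < m)%N -> mx_irreducible rho ->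
       exists k, mx_rsim rho (alpha k)) ->
    g != h -> (g \notin 'Z([set: gT]) \/ h \notin 'Z([set: gT]))%g ->
  exists k, ~~ is_scalar_mx (alpha k g - alpha k h).
Proof.
move=> alpha_all neq_gh noncentral; apply: NNPP => all_scalar.
suff /(irr_scalar_diff_center neq_gh)[gZ hZ] : irr_scalar_diff g h.
  by case: noncentral; rewrite ?gZ ?hZ.
move=> m rho irr_rho; have [m_gt1 | m_le1] := ltnP 1 m; last exact: is_scalar_mx_le1.
have [k rsim] := alpha_all _ _ m_gt1 irr_rho.
have /is_scalar_mxP[c alpha_c] : is_scalar_mx (alpha k g - alpha k h).
  by apply/negPn/negP => nscalar; apply: all_scalar; exists k.
by apply/is_scalar_mxP; exists c; apply: mx_rsim_scalar_diff rsim alpha_c; rewrite inE.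
Qed.

End ScalarDifferences.

Lemma form_conjC_eq0 (C : numClosedFieldType) m (M : 'M[C]_m) :
  (forall u, form Num.conj M u u = 0) -> M = 0.
Proof.
move=> M0; apply/matrixP => p q; rewrite mxE -(formee Num.conj).
have cross a : form Num.conj M ('e_p + a *: 'e_q) ('e_p + a *: 'e_q) =
    a^* * form Num.conj M 'e_p 'e_q + a * form Num.conj M 'e_q 'e_p.
  by rewrite formDl !formDr !formZl !formZr !M0; ring.
have := cross 1; have := cross 'i; rewrite !M0 conjCi rmorph1.
set x := form _ _ 'e_p _; set y := form _ _ 'e_q _ => Ei E1.
move/eqP: Ei; rewrite eq_sym mulNr addrC subr_eq0 => /eqP/(mulfI (neq0Ci C)) yx.
by move/eqP: E1; rewrite eq_sym !mul1r yx -mulr2n mulrn_eq0 => /eqP.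
Qed.

Lemma big_dfwith (I : finType) (T : I -> Type) (V : zmodType) (F : forall i, T i -> V)
    (f : forall i, T i) k (w : T k) :
  \sum_i F i (dfwith f w i) - F k w = \sum_i F i (f i) - F k (f k).
Proof.
rewrite (bigD1 k) //= [in RHS](bigD1 k) //= dfwith_in ![F k _ + _]addrC !addrK.
by apply: eq_bigr => i /negPf ki; rewrite dfwith_out // eq_sym ki.
Qed.

Section HermitianForms.
Variable R : realType.
Local Notation C := R[i].
Implicit Types (m : nat) (eps d t : R).

Definition in_sphere m (x : 'rV[C]_m) := \sum_p `|x 0 p| ^+ 2 = 1.

Definition near m eps (x y : 'rV[C]_m) := forall p, `|x 0 p - y 0 p| < (eps%:C)%C.

Definition sqnorm m (x : 'rV[C]_m) : R := \sum_p normc (x 0 p) ^+ 2.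

Lemma normC_normc (z : C) : `|z| = (normc z)%:C%C.
Proof. by case: z => a b; rewrite normc_def. Qed.

Lemma normc_real t : normc (t%:C)%C = `|t|.
Proof. by rewrite /normc /= expr0n addr0 sqrtr_sqr. Qed.

Lemma normc_sum I (r : seq I) (P : pred I) (F : I -> C) :
  normc (\sum_(i <- r | P i) F i) <= \sum_(i <- r | P i) normc (F i).
Proof.
rewrite -lecR rmorph_sum -normC_normc.
by rewrite (eq_bigr _ (fun i _ => esym (normC_normc (F i)))) ler_norm_sum.
Qed.

Lemma normc_ge0 (z : C) : 0 <= normc z.
Proof. by rewrite -lecR -normC_normc normr_ge0. Qed.

Lemma sum_normC2 m (x : 'rV[C]_m) : \sum_p `|x 0 p| ^+ 2 = (sqnorm x)%:C%C.
Proof. by rewrite rmorph_sum; apply: eq_bigr => p _; rewrite normC_normc rmorphXn. Qed.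

Lemma in_sphereE m (x : 'rV[C]_m) : in_sphere x <-> sqnorm x = 1.
Proof. by rewrite /in_sphere sum_normC2; split=> [/complexI|->]. Qed.

Lemma near_refl m eps (x : 'rV[C]_m) : 0 < eps -> near eps x x.
Proof. by move=> eps0 p; rewrite subrr normr0 ltcR. Qed.

Lemma near_le m eps1 eps2 (x y : 'rV[C]_m) : eps1 <= eps2 -> near eps1 x y -> near eps2 x y.
Proof. by move=> le_eps xy p; rewrite (lt_le_trans (xy p)) ?lecR. Qed.

Lemma near_trans m eps1 eps2 (x y z : 'rV[C]_m) :
  near eps1 x y -> near eps2 y z -> near (eps1 + eps2) x z.
Proof.
move=> xy yz p; rewrite rmorphD; apply: le_lt_trans (ler_distD (y 0 p) _ _) _.
exact: ltrD.
Qed.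

Lemma nearE m eps (x y : 'rV[C]_m) :
  near eps x y <-> forall p, normc (x 0 p - y 0 p) < eps.
Proof. by split=> xy p; have := xy p; rewrite normC_normc ltcR. Qed.

Lemma sphere_normc_le1 m (x : 'rV[C]_m) p : sqnorm x = 1 -> normc (x 0 p) <= 1.
Proof.
move=> x1; have x_ge0 := normc_ge0 (x 0 p).
suff : normc (x 0 p) ^+ 2 <= 1 by nra.
by rewrite -x1 /sqnorm (bigD1 p) //= lerDl sumr_ge0 // => q _; apply: sqr_ge0.
Qed.

(* [form] conjugates its second argument, [herm_form] its first: hence the transpose. *)
Lemma herm_formE m (A : 'M[C]_m) x : herm_form A x = form Num.conj A^T x x.
Proof.
rewrite /form mxE; apply: eq_bigr => p _; rewrite !mxE mulr_suml.
by apply: eq_bigr => q _; rewrite !mxE; ring.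
Qed.

Lemma herm_formZ m (A : 'M[C]_m) a x : herm_form A (a *: x) = `|a| ^+ 2 * herm_form A x.
Proof. by rewrite !herm_formE formZ normCK. Qed.

Lemma herm_formD_real m (A : 'M[C]_m) u v t :
  herm_form A (u + t%:C%C *: v) = herm_form A u
    + t%:C%C * (form Num.conj A^T u v + form Num.conj A^T v u) + (t ^+ 2)%:C%C * herm_form A v.
Proof.
have tC : Num.conj t%:C%C = t%:C%C by exact: conjc_real.
by rewrite !herm_formE formDl !formDr !formZl !formZr /= tC rmorphXn; ring.
Qed.

Lemma herm_formB m (A B : 'M[C]_m) x : herm_form (A - B) x = herm_form A x - herm_form B x.
Proof.
rewrite /herm_form -sumrB; apply: eq_bigr => p _; rewrite -sumrB.
by apply: eq_bigr => q _; rewrite !mxE; ring.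
Qed.

Lemma herm_form_scalar m (c : C) (x : 'rV[C]_m) : herm_form c%:M x = c * (sqnorm x)%:C%C.
Proof.
rewrite herm_formE /form tr_scalar_mx mul_mx_scalar -scalemxAl mxE -sum_normC2.
by congr (_ * _); rewrite mxE; apply: eq_bigr => p _; rewrite !mxE normCK.
Qed.

Lemma herm_form_eq0 m (B : 'M[C]_m) : (forall x, herm_form B x = 0) -> B = 0.
Proof.
move=> B0; apply: trmx_inj; rewrite trmx0; apply: form_conjC_eq0 => x.
by rewrite -herm_formE.
Qed.

Lemma normc_conj (z : C) : normc z^* = normc z.
Proof. by apply: (@complexI R); rewrite -!normC_normc normcJ. Qed.

Lemma normc_distB (z w : C) : `|normc z - normc w| <= normc (z - w).
Proof.
have le_z : normc z <= normc (z - w) + normc w by rewrite -[z in normc z](subrK w) le_normcD.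
have le_w : normc w <= normc (z - w) + normc z.
  by rewrite -[normc (z - w)]normcN opprB -[w in normc w](subrK z) le_normcD.
by rewrite ler_norml; apply/andP; split; lra.
Qed.

Lemma sqnormZ m (a : C) (x : 'rV[C]_m) : sqnorm (a *: x) = normc a ^+ 2 * sqnorm x.
Proof. by rewrite /sqnorm mulr_sumr; apply: eq_bigr => p _; rewrite mxE normcM exprMn. Qed.

Lemma sqr_dist_le (a b e : R) : 0 <= a <= 1 -> 0 <= b -> `|b - a| <= e -> e <= 1 ->
  `|b ^+ 2 - a ^+ 2| <= 3 * e.
Proof.
move=> /andP[a0 a1] b0; rewrite ler_norml => /andP[ab1 ab2] e1.
by rewrite ler_norml; apply/andP; split; nra.
Qed.

Lemma sqnorm_near m (u x : 'rV[C]_m) d : sqnorm u = 1 -> d <= 1 -> near d u x ->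
  `|sqnorm x - 1| <= 3 * m%:R * d.
Proof.
move=> u1 d1 /nearE xu; rewrite -{1}u1 /sqnorm -sumrB.
apply: (le_trans (ler_norm_sum _ _ _)).
have -> : 3 * m%:R * d = \sum_(p < m) 3 * d.
  by rewrite sumr_const card_ord -mulr_natr; ring.
apply: ler_sum => p _; apply: sqr_dist_le; rewrite ?normc_ge0 ?sphere_normc_le1 //.
by rewrite distrC (le_trans (normc_distB _ _)) ?ltW.
Qed.

Lemma inv_sqrt_near1 (N : R) : `|N - 1| <= 2^-1 -> `|(Num.sqrt N)^-1 - 1| <= 2 * `|N - 1|.
Proof.
rewrite ler_norml => /andP[N_lb _].
set s := Num.sqrt N; have s0 : 0 < s by rewrite sqrtr_gt0; lra.
have sN : N = s ^+ 2 by rewrite sqr_sqrtr //; lra.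
have -> : s^-1 - 1 = (1 - s) / s by field; rewrite gt_eqF.
have -> : N - 1 = (s - 1) * (s + 1) by rewrite sN; ring.
have s1_gt0 : 0 < s + 1 by lra.
rewrite !normrM normfV (gtr0_norm s0) (gtr0_norm s1_gt0) distrC ler_pdivrMr //.
have : 1 <= 2 * s * (s + 1) by nra.
by have := normr_ge0 (s - 1); nra.
Qed.

Lemma normalize_near m (u : 'rV[C]_m) eps : in_sphere u -> 0 < eps ->
  exists2 d, 0 < d & forall x, near d u x ->
    exists2 r, r != 0 & in_sphere (r%:C%C *: x) /\ near eps u (r%:C%C *: x).
Proof.
move=> /in_sphereE u1 eps0; set M : R := m%:R; have M0 : 0 <= M by [].
pose d := Num.min 1 eps / (12 * M + 2).
have d0 : 0 < d by rewrite divr_gt0 ?lt_min ?ltr01 ?eps0 //; lra.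
have [d1 d_eps] : d * (12 * M + 2) <= 1 /\ d * (12 * M + 2) <= eps.
  by rewrite divfK ?ge_min ?le_min ?lexx ?orbT //; lra.
have d_le1 : d <= 1 by nra.
exists d => // x xu.
have N_near : `|sqnorm x - 1| <= 3 * M * d by apply: sqnorm_near u1 d_le1 xu.
have /inv_sqrt_near1 r_near : `|sqnorm x - 1| <= 2^-1 by nra.
have N0 : 0 < sqnorm x by move: N_near; rewrite ler_norml => /andP[]; nra.
set r := (Num.sqrt (sqnorm x))^-1 in r_near *.
have r0 : 0 < r by rewrite invr_gt0 sqrtr_gt0.
exists r; first by rewrite gt_eqF.
split.
  apply/in_sphereE; rewrite sqnormZ normc_real gtr0_norm // exprVn sqr_sqrtr ?mulVf //.
    by rewrite gt_eqF.
  exact: ltW.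
apply/nearE => p; rewrite mxE.
have -> : u 0 p - r%:C%C * x 0 p = (1 - r)%:C%C * x 0 p + (u 0 p - x 0 p).
  by rewrite rmorphB /=; ring.
move/nearE: xu => /(_ p) xu.
have x_le : normc (x 0 p) <= 2.
  have -> : x 0 p = u 0 p + - (u 0 p - x 0 p) by rewrite opprB addrC subrK.
  apply: le_trans (le_normcD _ _) _; rewrite normcN.
  by have := sphere_normc_le1 p u1; lra.
have rx_le : `|r - 1| * normc (x 0 p) <= 12 * M * d.
  have := normr_ge0 (r - 1); have := normc_ge0 (x 0 p); nra.
apply: le_lt_trans (le_normcD _ _) _; rewrite normcM normc_real distrC.
nra.
Qed.

Lemma herm_form_eq0_near m (B : 'M[C]_m) (u : 'rV[C]_m) d : 0 < d ->
  (forall x, near d u x -> herm_form B x = 0) -> B = 0.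
Proof.
move=> d0 B0; apply: herm_form_eq0 => v.
pose V := 1 + \sum_p normc (v 0 p).
have v_lt p : normc (v 0 p) < V.
  rewrite /V (bigD1 p) //=.
  have : 0 <= \sum_(q | q != p) normc (v 0 q) by apply: sumr_ge0 => q _; apply: normc_ge0.
  lra.
have V_ge1 : 1 <= V by rewrite lerDl sumr_ge0 // => q _; apply: normc_ge0.
have vanish t : 0 < t -> t * V <= d -> herm_form B (u + t%:C%C *: v) = 0.
  move=> t0 tV; apply: B0; apply/nearE => p; rewrite !mxE opprD addNKr normcN.
  by rewrite normcM normc_real gtr0_norm //; have := v_lt p; nra.
have Bu : herm_form B u = 0 by apply/B0/near_refl.
(* t |-> herm_form B (u + t v) is a quadratic polynomial vanishing at 0, s and 2 s. *)
pose s := d / (2 * V).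
have s0 : 0 < s by rewrite divr_gt0 //; lra.
have sV : s * V = d / 2 by rewrite /s; field; lra.
have := vanish s s0 (ltac:(lra)); have := vanish (2 * s) (ltac:(lra)) (ltac:(lra)).
have S2 : (2 * s)%:C%C = 2 * s%:C%C by rewrite rmorphM rmorph_nat.
rewrite !herm_formD_real Bu !rmorphXn /= !S2.
set S := s%:C%C; set b := form _ _ u v + _; set c := herm_form B v => E2 E1.
have : - (2 * S ^+ 2 * c) = 2 * (0 + S * b + S ^+ 2 * c) - (0 + 2 * S * b + (2 * S) ^+ 2 * c).
  by ring.
rewrite E1 E2 mulr0 subr0 => /eqP; rewrite oppr_eq0 !mulf_eq0 pnatr_eq0 /= orbb.
case/orP=> [/eqP S0 | /eqP //].
by move: s0; rewrite (@complexI R s 0 S0) ltxx.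
Qed.

Lemma herm_form_locally_constant m (A : 'M[C]_m) (u : 'rV[C]_m) eps :
    in_sphere u -> 0 < eps ->
  (forall w, in_sphere w -> near eps u w -> herm_form A w = herm_form A u) ->
  A = (herm_form A u)%:M.
Proof.
move=> u1 eps0 A_const; apply/eqP; rewrite -subr_eq0; apply/eqP.
have [d d0 normalize] := normalize_near u1 eps0.
apply: (herm_form_eq0_near d0) => x /normalize[r r0 [w1 wu]].
have : herm_form (A - (herm_form A u)%:M) (r%:C%C *: x) = 0.
  by rewrite herm_formB herm_form_scalar A_const // (in_sphereE _).1 // mulr1 subrr.
rewrite herm_formZ => /eqP; rewrite mulf_eq0 sqrf_eq0 normr_eq0 => /orP[|/eqP //].
by move=> /eqP/(@complexI R r 0)/eqP; rewrite (negbTE r0).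
Qed.

Lemma normc_herm_formB m (A : 'M[C]_m) (x y : 'rV[C]_m) d :
    sqnorm x = 1 -> sqnorm y = 1 -> near d x y ->
  normc (herm_form A x - herm_form A y) <= 2 * d * \sum_p \sum_q normc (A p q).
Proof.
move=> x1 y1 /nearE xy; rewrite /herm_form -sumrB mulr_sumr.
apply: le_trans (normc_sum _ _ _) (ler_sum _ _) => p _; rewrite -sumrB mulr_sumr.
apply: le_trans (normc_sum _ _ _) (ler_sum _ _) => q _.
have -> : (x 0 p)^* * A p q * x 0 q - (y 0 p)^* * A p q * y 0 q =
    A p q * ((x 0 p)^* * (x 0 q - y 0 q)) + A p q * ((x 0 p - y 0 p)^* * y 0 q).
  by rewrite rmorphB; ring.
apply: le_trans (le_normcD _ _) _; rewrite !normcM !normc_conj -mulrDr mulrC.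
rewrite ler_wpM2r ?normc_ge0 //.
have := xy p; have := xy q; have := sphere_normc_le1 p x1; have := sphere_normc_le1 q y1.
have := normc_ge0 (x 0 p); have := normc_ge0 (y 0 q).
have := normc_ge0 (x 0 p - y 0 p); have := normc_ge0 (x 0 q - y 0 q).
nra.
Qed.

Section SphereProduct.
Variables (l : nat) (n : 'I_l -> nat) (A : forall k, 'M[C]_(n k)).
Implicit Types xi zeta : forall k, 'rV[C]_(n k).

Lemma sum_herm_form_neq0_near xi : in_sphere_prod xi ->
    \sum_k herm_form (A k) (xi k) != 0 ->
  exists2 d, 0 < d & forall zeta, in_sphere_prod zeta -> close d xi zeta ->
    \sum_k herm_form (A k) (zeta k) != 0.
Proof.
move=> xi1 Fxi.
pose K := \sum_k \sum_p \sum_q normc (A k p q).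
have K0 : 0 <= K by do 3![apply: sumr_ge0 => ? _]; apply: normc_ge0.
pose f := normc (\sum_k herm_form (A k) (xi k)).
have f0 : 0 < f by rewrite lt0r normc_ge0 andbT; apply: contra Fxi => /eqP/eq0_normc ->.
exists (f / (2 * K + 1)); first by rewrite divr_gt0 //; lra.
move=> zeta zeta1 xi_zeta; apply/negP => /eqP Fzeta.
have : normc (\sum_k herm_form (A k) (xi k) - \sum_k herm_form (A k) (zeta k))
    <= 2 * (f / (2 * K + 1)) * K.
  rewrite -sumrB /K mulr_sumr; apply: le_trans (normc_sum _ _ _) (ler_sum _ _) => k _.
  by apply: normc_herm_formB (xi_zeta k); apply/in_sphereE.
rewrite Fzeta subr0 -/f.
have -> : 2 * (f / (2 * K + 1)) * K = f - f / (2 * K + 1) by field; lra.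
have : 0 < f / (2 * K + 1) by rewrite divr_gt0 //; lra.
lra.
Qed.

Lemma sum_herm_form_neq0_dense k xi eps : ~~ is_scalar_mx (A k) ->
    in_sphere_prod xi -> 0 < eps ->
  exists xi', [/\ in_sphere_prod xi', close eps xi xi'
                 & \sum_j herm_form (A j) (xi' j) != 0].
Proof.
move=> nscalar xi1 eps0; apply: NNPP => no_xi'.
have F0 zeta : in_sphere_prod zeta -> close eps xi zeta ->
    \sum_j herm_form (A j) (zeta j) = 0.
  by move=> zeta1 xi_zeta; apply/eqP/negPn/negP => Fz; apply: no_xi'; exists zeta.
move/negP: nscalar; apply; apply/is_scalar_mxP; exists (herm_form (A k) (xi k)).
apply: (herm_form_locally_constant (xi1 k) eps0) => w w1 xiw.
have w_sphere : in_sphere_prod (dfwith xi w) by move=> j; case: dfwithP.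
have w_close : close eps xi (dfwith xi w).
  by move=> j; case: dfwithP => // j' _; apply: near_refl.
have := big_dfwith (fun j => herm_form (A j)) xi w.
rewrite !F0 //; last by move=> j; apply: near_refl.
by rewrite !sub0r => /oppr_inj.
Qed.

End SphereProduct.

Lemma nowhere_dense_of_dense_open_compl l (n : 'I_l -> nat)
    (V : (forall k, 'rV[C]_(n k)) -> Prop) :
  (forall xi, in_sphere_prod xi -> forall eps, 0 < eps ->
     exists xi', [/\ in_sphere_prod xi', close eps xi xi' & ~ V xi']) ->
  (forall xi, in_sphere_prod xi -> ~ V xi -> exists2 d, 0 < d &
     forall zeta, in_sphere_prod zeta -> close d xi zeta -> ~ V zeta) ->
  nowhere_dense_in_sphere_prod V.
Proof.
move=> dense open xi xi1 eps eps0.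
have eps2 : 0 < eps / 2 by rewrite divr_gt0.
have [xi' [xi'1 xi_xi' nVxi']] := dense xi xi1 _ eps2.
have [d d0 nV] := open xi' xi'1 nVxi'.
exists xi', (Num.min d (eps / 2)); first by rewrite lt_min d0.
split=> // zeta zeta1 xi'_zeta; split=> [k|].
  rewrite (splitr eps); apply: near_trans (xi_xi' k) _.
  by apply: near_le (xi'_zeta k); rewrite ge_min lexx orbT.
by apply: nV => // k; apply: near_le (xi'_zeta k); rewrite ge_min lexx.
Qed.

End HermitianForms.


Theorem proposition6p2 (R : realType) (gT : finGroupType) (l : nat)
  (n : 'I_l -> nat)
  (alpha : forall k : 'I_l, mx_representation R[i] [set: gT] (n k))
  (* each alpha_k is unitary, irreducible, of dimension > 1 *)
  (alpha_unitary : forall k, unitary_repr (alpha k))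
  (alpha_irr : forall k, mx_irreducible (alpha k))
  (alpha_dim : forall k, (1 < n k)%N)
  (* pairwise inequivalent *)
  (alpha_ineq : forall k k', k <> k' -> ~ mx_rsim (alpha k) (alpha k'))
  (* every irreducible representation of dimension > 1 is one of them *)
  (alpha_all : forall (m : nat) (rho : mx_representation R[i] [set: gT] m),
      (1 < m)%N -> mx_irreducible rho -> exists k, mx_rsim rho (alpha k))
  (g h : gT) (hgh : g <> h)
  (hcent : g \notin ('Z([set: gT]))%g \/ h \notin ('Z([set: gT]))%g) :
  nowhere_dense_in_sphere_prod
    (fun xi : forall k : 'I_l, 'rV[R[i]]_(n k) => Txi alpha xi g = Txi alpha xi h).
Proof.
pose A k := alpha k g - alpha k h.
have [k nscalar] : exists k, ~~ is_scalar_mx (A k).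
  by apply: exists_nonscalar_repr_diff alpha_all _ hcent; apply/eqP.
have TxiE xi : (Txi alpha xi g = Txi alpha xi h) <-> \sum_k herm_form (A k) (xi k) = 0.
  have -> : \sum_k herm_form (A k) (xi k) = Txi alpha xi g - Txi alpha xi h.
    by rewrite /Txi -sumrB; apply: eq_bigr => j _; rewrite herm_formB.
  by split=> [->|/eqP]; [rewrite subrr | rewrite subr_eq0 => /eqP].
apply: nowhere_dense_of_dense_open_compl => [xi xi1 eps eps0 | xi xi1 /TxiE/eqP nV].
  have [xi' [xi'1 xi_xi' /eqP nV]] := sum_herm_form_neq0_dense nscalar xi1 eps0.
  by exists xi'; split=> // /TxiE.
have [d d0 nV_near] := sum_herm_form_neq0_near xi1 nV.
by exists d => // zeta zeta1 xi_zeta /TxiE/eqP; apply/negP/nV_near.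
Qed.
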